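(* Let $W=\{w_1,\dots,w_n\}$, $F=\{f_1,\dots,f_m\}$, let $\succcurlyeq$ be a preference profile and $\bm r=(r_1,\dots,r_{n+m})$ a ranking of $W\cup F$. If the tensors $\mathbf P_W,\mathbf P_F$ and the matrix $\bm R$ are defined from $\succcurlyeq$ and $\bm r$ as below, then $\mathrm{TSD}(\mathbf P_W,\mathbf P_F,\bm R)$ equals the matching matrix of the matching produced by serial dictatorship with ranking $\bm r$ on $\succcurlyeq$.
   Context: Preferences: each worker has a linear order $\succcurlyeq_{w_i}$ on $\overline F=F\cup\{\perp\}$, each firm a linear order $\succcurlyeq_{f_j}$ on $\overline W=W\cup\{\perp\}$ ($\perp$ = unmatched). For $x\in\overline F$, $\mathrm{ord}(x,\succcurlyeq_{w_i})=\#\{x'\in\overline F: x'\succcurlyeq_{w_i}x\}$ (position, $1$ = best); similarly for firms. Serial dictatorship (SD) with ranking $\bm r$: for $k=1,\dots,n+m$, if $r_k$ is not yet matched, $r_k$ is assigned its most preferred option among $\perp$ and the not-yet-matched agents of the other side (that agent, if any, becomes matched with $r_k$). The matching matrix $\bm M\in\{0,1\}^{(n+1)\times(m+1)}$ of a matching has $M_{ij}=1$ iff $w_i$ is matched with $f_j$ ($i\le n,j\le m$), $M_{i,m+1}=1$ iff $w_i$ is unmatched, $M_{n+1,j}=1$ iff $f_j$ is unmatched, $M_{n+1,m+1}=0$, all other entries $0$. Inputs: $\mathbf P_W=[\bm P_{w_1},\dots,\bm P_{w_n}]\in\{0,1\}^{n\times(m+1)\times(m+1)}$ with $(\bm P_{w_i})_{j,k}=1$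 iff ($j\le m$ and $\mathrm{ord}(f_j,\succcurlyeq_{w_i})=k$) or ($j=m+1$ and $\mathrm{ord}(\perp,\succcurlyeq_{w_i})=k$); $\mathbf P_F=[\bm P_{f_1},\dots,\bm P_{f_m}]\in\{0,1\}^{m\times(n+1)\times(n+1)}$ defined analogously with rows indexed by $w_1,\dots,w_n,\perp$; $\bm R\in\{0,1\}^{(n+m)\times(n+m)}$ with $R_{i,k}=1$ iff ($i\le n$ and $r_k=w_i$) or ($i>n$ and $r_k=f_{i-n}$). Subroutine FindCounterpart$(\bm P)$ for $\bm P\in\mathbb R^{p\times q}$: let $c_j=\sum_i P_{ij}$, replace $c$ by its cumulative sum $(\sum_{l\le j}c_l)_j$, apply elementwise $\mathrm{tw}(x)=0$ if $x\le0$, $x$ if $0<x\le1$, $2-x$ if $1<x\le2$, $0$ if $x>2$, and return the column vector $\bm P\bm c^\top\in\mathbb R^{p}$. Masks: for $k\in[n+m]$, $\bm U_W^{(k)}\in\mathbb R^{(m+1)\times(m+1)}$ is $\sum_{r=n+1}^{n+m}R_{r,k}\bm E^{(m+1)}_{r-n}$ and $\bm U_F^{(k)}\in\mathbb R^{(n+1)\times(n+1)}$ is $\sum_{r=1}^nR_{r,k}\bm E^{(n+1)}_r$, where $\bm E^{(s)}_t$ is the $s\times s$ matrix whose $t$-th row is all $-1$ and other entries $0$. TSD: set $\bm M=\bm O_{(n+1)\times(m+1)}$. For $k=1,\dots,n+m$: (1) $\bm d_w=(R_{1,k},\dots,R_{n,k})$, $\bm d_f=(R_{n+1,k},\dots,R_{n+m,k})$;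 (2) $\bm P_w=\sum_i(\bm d_w)_i\bm P_{w_i}$, $\bm P_f=\sum_j(\bm d_f)_j\bm P_{f_j}$ (current tensors); (3) $\bm c_w=$FindCounterpart$(\bm P_w)\in\mathbb R^{m+1}$, $\bm c_f=$FindCounterpart$(\bm P_f)\in\mathbb R^{n+1}$ (as row vectors); (4) $\bm M_w=[\bm d_w\|0]^\top\bm c_w$, $\bm M_f=[\bm d_f\|0]^\top\bm c_f$; (5) $\bm M\leftarrow\bm M+\bm M_w+\bm M_f^\top$; (6) $\bm V_W\in\mathbb R^{(m+1)\times(m+1)}$ has $t$-th row equal to $-(\bm c_w)_t$ times the all-ones row for $t\le m$ and zero row $m+1$; $\bm V_F\in\mathbb R^{(n+1)\times(n+1)}$ analogously from $\bm c_f$; (7) add $\bm U_W^{(k)}+\bm V_W$ to every $\bm P_{w_i}$ and $\bm U_F^{(k)}+\bm V_F$ to every $\bm P_{f_j}$; (8) replace each $\bm P_{w_i}$ by $(1-(\bm c_f)_i)\,\mathrm{ReLU}(\bm P_{w_i})$ and each $\bm P_{f_j}$ by $(1-(\bm c_w)_j)\,\mathrm{ReLU}(\bm P_{f_j})$, with $\mathrm{ReLU}$ elementwise $\max\{x,0\}$. Output $\bm M$. *)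

From HB Require Import structures.
From mathcomp Require Import all_boot all_order all_algebra.
Set Implicit Arguments. Unset Strict Implicit. Unset Printing Implicit Defensive.
Import Order.TTheory GRing.Theory Num.Theory.
Local Open Scope ring_scope.

(* Workers are 'I_n, firms are 'I_m; "⊥" is None in option types.
   Matrix index conventions (0-based): for 'I_k.+1, index i with
   unlift ord_max i = Some i' denotes agent i', and ord_max denotes ⊥. *)

Definition linear_order (T : finType) (le : rel T) : Prop :=
  [/\ reflexive le, antisymmetric le, transitive le & total le].

(** ord(x, ≽) = #{x' | x' ≽ x}  (1 = best). *)
Definition ord_pos (T : finType) (le : rel T) (x : T) : nat :=
  #|[pred x' | le x' x]|.

(** Most preferred element among those satisfying [avail] (⊥ is always
    available); default ⊥. *)
Definition most_pref (A : finType) (le : rel (option A)) (avail : pred A)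
  : option A :=
  odflt None [pick x : option A |
     (oapp avail true x) && [forall y : option A, oapp avail true y ==> le x y]].

(* state: for each worker / firm, None = not yet matched,
   Some None = unmatched (assigned ⊥), Some (Some p) = matched to p *)
Record sd_state (n m : nat) := SDState {
  sd_w : 'I_n -> option (option 'I_m);
  sd_f : 'I_m -> option (option 'I_n) }.

Definition sd_step (n m : nat) (prefW : 'I_n -> rel (option 'I_m))
  (prefF : 'I_m -> rel (option 'I_n)) (s : sd_state n m)
  (a : 'I_n + 'I_m) : sd_state n m :=
  match a with
  | inl i =>
    if sd_w s i is None then
      let x := most_pref (prefW i) [pred j | sd_f s j == None] in
      SDState (fun i' => if i' == i then Some x else sd_w s i')
              (fun j => if x == Some j then Some (Some i) else sd_f s j)
    else s
  | inr j =>
    if sd_f s j is None then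
      let y := most_pref (prefF j) [pred i | sd_w s i == None] in
      SDState (fun i => if y == Some i then Some (Some j) else sd_w s i)
              (fun j' => if j' == j then Some y else sd_f s j')
    else s
  end.

Definition SD (n m : nat) (prefW : 'I_n -> rel (option 'I_m))
  (prefF : 'I_m -> rel (option 'I_n)) (r : 'I_(n + m) -> 'I_n + 'I_m)
  : sd_state n m :=
  foldl (fun s k => sd_step prefW prefF s (r k))
        (SDState (fun _ => None) (fun _ => None)) (enum 'I_(n + m)).

Definition matching_matrix (R : nzRingType) (n m : nat) (s : sd_state n m)
  : 'M[R]_(n.+1, m.+1) :=
  \matrix_(i, j)
    match unlift ord_max i, unlift ord_max j with
    | Some i', Some j' => (sd_w s i' == Some (Some j'))%:R
    | Some i', None => (~~ [exists j', sd_w s i' == Some (Some j')])%:R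
    | None, Some j' => (~~ [exists i', sd_f s j' == Some (Some i')])%:R
    | None, None => 0
    end.

Definition pref_tensor (R : nzRingType) (A : finType) (k : nat)
  (le : rel (option A)) (to : 'I_k.+1 -> option A) : 'M[R]_k.+1 :=
  \matrix_(j, c) (ord_pos le (to j) == c.+1)%N%:R.

Definition PW_of (R : nzRingType) (n m : nat)
  (prefW : 'I_n -> rel (option 'I_m)) : 'I_n -> 'M[R]_m.+1 :=
  fun i => pref_tensor R (prefW i) (unlift ord_max).

Definition PF_of (R : nzRingType) (n m : nat)
  (prefF : 'I_m -> rel (option 'I_n)) : 'I_m -> 'M[R]_n.+1 :=
  fun j => pref_tensor R (prefF j) (unlift ord_max).

(** R_{i,k} = 1 iff r_k is the agent of row i (rows 0..n-1 workers,
    n..n+m-1 firms) *)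
Definition R_of (R : nzRingType) (n m : nat) (r : 'I_(n + m) -> 'I_n + 'I_m)
  : 'M[R]_(n + m) :=
  \matrix_(i, k) (r k == split i)%:R.

Section TSD.
Variable R : realFieldType.

Definition tw (x : R) : R :=
  if x <= 0 then 0 else if x <= 1 then x else if x <= 2 then 2 - x else 0.

Definition relu (x : R) : R := Num.max x 0.

Definition find_counterpart (p q : nat) (P : 'M[R]_(p, q)) : 'cV[R]_p :=
  P *m \col_(j < q) tw (\sum_(l < q | (l <= j)%N) \sum_(i < p) P i l).

Definition Emat (s : nat) (t : 'I_s) : 'M[R]_s :=
  \matrix_(a, b) (if a == t then -1 else 0).

Definition ext0 (s : nat) (v : 'I_s -> R) : 'rV[R]_s.+1 :=
  \row_(i < s.+1) oapp v 0 (unlift ord_max i).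

Definition Vmat (s : nat) (c : 'rV[R]_s.+1) : 'M[R]_s.+1 :=
  \matrix_(t, b) (if t == ord_max then 0 else - c 0 t).

Record tsd_state (n m : nat) := TSDState {
  ts_PW : 'I_n -> 'M[R]_m.+1;
  ts_PF : 'I_m -> 'M[R]_n.+1;
  ts_M : 'M[R]_(n.+1, m.+1) }.

Definition tsd_step (n m : nat) (Rm : 'M[R]_(n + m)) (s : tsd_state n m)
  (k : 'I_(n + m)) : tsd_state n m :=
  let dw := fun i : 'I_n => Rm (lshift m i) k in
  let df := fun j : 'I_m => Rm (rshift n j) k in
  let Pw := \sum_(i < n) dw i *: ts_PW s i in
  let Pf := \sum_(j < m) df j *: ts_PF s j in
  let cw := (find_counterpart Pw)^T in
  let cf := (find_counterpart Pf)^T in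
  let Mw := (ext0 dw)^T *m cw in
  let Mf := (ext0 df)^T *m cf in
  let UW := \sum_(r < m) Rm (rshift n r) k *: Emat (lift ord_max r) in
  let UF := \sum_(r < n) Rm (lshift m r) k *: Emat (lift ord_max r) in
  let VW := Vmat cw in
  let VF := Vmat cf in
  TSDState
    (fun i => (1 - cf 0 (lift ord_max i)) *: map_mx relu (ts_PW s i + UW + VW))
    (fun j => (1 - cw 0 (lift ord_max j)) *: map_mx relu (ts_PF s j + UF + VF))
    (ts_M s + Mw + Mf^T).

Definition TSD (n m : nat) (PW : 'I_n -> 'M[R]_m.+1) (PF : 'I_m -> 'M[R]_n.+1)
  (Rm : 'M[R]_(n + m)) : 'M[R]_(n.+1, m.+1) :=
  ts_M (foldl (tsd_step Rm) (TSDState PW PF 0) (enum 'I_(n + m))).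

End TSD.

From HB Require Import structures.
From mathcomp Require Import all_boot all_order all_algebra.
Set Implicit Arguments. Unset Strict Implicit. Unset Printing Implicit Defensive.
Import Order.TTheory GRing.Theory Num.Theory.
Local Open Scope ring_scope.

(* Run both algorithms side by side.  Before each turn, the matrix TSD keeps
   for an agent that has not yet had its turn is that agent's preference
   matrix with the rows of all unavailable options erased (all rows, if the
   agent is already assigned), and M is the matching matrix of the partial SD
   assignment.  On such a matrix FindCounterpart returns the indicator of the
   most preferred available option: in the column holding that option's rank,
   the cumulative column sum counts the available options ranked at least as
   high, and tw maps this count to 1 exactly when it is 1.  The masks U and V
   then erase the rows of the mover and of its choice, ReLU clears the
   negative entries, and the factor 1 - c erases the chosen counterpart's
   matrix, which is exactly the SD update.  An agent that is already assigned
   has a zero matrix, so its turn changes nothing in either algorithm. *)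

(** * Preferences *)

Section LinearOrder.
Variables (A : finType) (le : rel A).
Hypothesis le_linear : linear_order le.

Lemma lo_refl x : le x x. Proof. by case: le_linear. Qed.

Lemma lo_anti x y : le x y -> le y x -> x = y.
Proof. by case: le_linear => _ anti _ _ lexy leyx; apply: anti; rewrite lexy. Qed.

Lemma lo_trans x y z : le x y -> le y z -> le x z.
Proof. by case: le_linear => _ _ tr _; apply: tr. Qed.

Lemma lo_total x y : le x y || le y x.
Proof. by case: le_linear. Qed.

Lemma ord_pos_gt0 x : (0 < ord_pos le x)%N.
Proof. by apply/card_gt0P; exists x; rewrite inE lo_refl. Qed.

Lemma ord_pos_lt x y : le x y -> x != y -> (ord_pos le x < ord_pos le y)%N.
Proof.
move=> lexy neq_xy; apply/proper_card/properP; split.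
  by apply/subsetP => z; rewrite !inE => /lo_trans; apply.
exists y; rewrite !inE ?lo_refl //.
by apply: contra neq_xy => leyx; rewrite (lo_anti lexy leyx).
Qed.

Lemma ord_pos_le x y : (ord_pos le x <= ord_pos le y)%N = le x y.
Proof.
have [-> | neq_xy] := eqVneq x y; first by rewrite leqnn lo_refl.
case lexy: (le x y); first exact/ltnW/ord_pos_lt.
have leyx : le y x by move: (lo_total x y); rewrite lexy.
by apply/negbTE; rewrite -ltnNge ord_pos_lt // eq_sym.
Qed.

Definition pref_best (S : pred A) (x : A) : bool :=
  S x && [forall y, S y ==> le x y].

Lemma pref_best_mem (S : pred A) x : pref_best S x -> S x.
Proof. by case/andP. Qed.

Lemma pref_best_uniq (S : pred A) x y : pref_best S x -> pref_best S y -> x = y.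
Proof.
move=> /andP[Sx /forallP best_x] /andP[Sy /forallP best_y].
by apply: lo_anti; [exact: implyP (best_x y) Sy | exact: implyP (best_y x) Sx].
Qed.

Lemma pref_best_exists (S : pred A) x0 : S x0 -> exists x, pref_best S x.
Proof.
move=> Sx0; have [x Sx min_x] := @arg_minnP _ x0 S (ord_pos le) Sx0.
exists x; rewrite /pref_best Sx; apply/forallP => y; apply/implyP => Sy.
by rewrite -ord_pos_le min_x.
Qed.

Lemma pref_best_card (S : pred A) x :
  pref_best S x = S x && (#|[pred y | S y && le y x]| == 1).
Proof.
rewrite /pref_best; case Sx: (S x) => //=.
have in_x : x \in [pred y | S y && le y x] by rewrite inE Sx lo_refl.
apply/forallP/idP => [best_x | card1 y].
  apply/eqP/(eq_card1 (x := x)) => y; rewrite !inE.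
  apply/andP/eqP => [[Sy leyx] | ->]; last by rewrite Sx lo_refl.
  by apply: lo_anti leyx _; apply: implyP (best_x y) Sy.
apply/implyP => Sy; case/orP: (lo_total x y) => // leyx.
have /card_le1P/(_ x in_x y) : (#|[pred y | S y && le y x]| <= 1)%N.
  by rewrite (eqP card1).
by rewrite !inE Sy leyx => /esym/eqP ->; rewrite lo_refl.
Qed.

End LinearOrder.

Lemma most_pref_best (A : finType) (le : rel (option A)) (avail : pred A) x :
  linear_order le ->
  pref_best le (oapp avail true) x = (x == most_pref le avail).
Proof.
move=> le_linear; rewrite /most_pref; case: pickP => [y best_y | no_best] /=.
  by apply/idP/eqP => [best_x | ->]; first exact: pref_best_uniq best_x best_y.
have [z best_z] := pref_best_exists le_linear (isT : oapp avail true None).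
by move: best_z; rewrite /pref_best no_best.
Qed.

Lemma tw_nat (R : realFieldType) (k : nat) : tw (k%:R : R) = (k == 1)%:R.
Proof.
rewrite /tw; case: k => [|[|[|k]]]; rewrite ?lexx ?ler10 ?subrr ?ler_nat //=;
  by rewrite !leNgt ltr0n ltr1n.
Qed.

Lemma sum_indicator (R : nzRingType) (I : finType) (P : pred I) i :
  \sum_(l | P l) ((l == i)%:R : R) = (P i)%:R.
Proof.
case Pi: (P i).
  by rewrite (bigD1 i) //= eqxx big1 ?addr0 // => l /andP[_ /negbTE ->].
by rewrite big1 // => l Pl; case: eqP Pl => // ->; rewrite Pi.
Qed.

Lemma sum_bool_card (R : nzRingType) (I : finType) (P : pred I) :
  \sum_i ((P i)%:R : R) = #|P|%:R.
Proof.
rewrite -sumr_const [RHS]big_mkcond; apply: eq_bigr => i _.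
by rewrite unfold_in; case: (P i).
Qed.

Lemma relu_bool_sub (R : realFieldType) (b d : bool) :
  relu (b%:R - d%:R : R) = (b && ~~ d)%:R.
Proof.
rewrite /relu; case: b; case: d => /=.
- by rewrite subrr maxxx.
- by rewrite subr0 max_l ?ler01.
- by rewrite sub0r max_r ?lerN10.
- by rewrite subrr maxxx.
Qed.

(** * Masked preference matrices *)

Section MaskedPref.
Variables (R : realFieldType) (k : nat) (le : rel (option 'I_k)).
Hypothesis le_linear : linear_order le.
Local Notation to := (unlift (@ord_max k)).

Definition masked_pref (S : pred (option 'I_k)) : 'M[R]_k.+1 :=
  \matrix_(a, c) (S (to a) && (ord_pos le (to a) == c.+1)%N)%:R.

Lemma card_unlift (P : pred (option 'I_k)) : #|[pred a | P (to a)]| = #|P|.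
Proof.
pose of_opt (y : option 'I_k) : 'I_k.+1 := oapp (lift ord_max) ord_max y.
have toK : cancel to of_opt by move=> a; case: unliftP.
have of_optK : cancel of_opt to by case=> [j|] /=; rewrite ?liftK ?unlift_none.
rewrite -[#|[pred a | _]|]/#|[preim to of P]| card_preim; last exact: can_inj toK.
apply: eq_card => y; rewrite !inE andb_idl // => _.
by apply/codomP; exists (of_opt y); rewrite of_optK.
Qed.

Definition rank_index (x : option 'I_k) : 'I_k.+1 := inord (ord_pos le x).-1.

Lemma rank_indexE x : rank_index x = (ord_pos le x).-1 :> nat.
Proof.
have pos_le : (ord_pos le x <= k.+1)%N by rewrite -{2}[k]card_ord -card_option max_card.
by rewrite inordK // prednK // ord_pos_gt0.
Qed.

Lemma ord_pos_eqS x (c : 'I_k.+1) :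
  (ord_pos le x == c.+1)%N = (c == rank_index x).
Proof.
rewrite -(inj_eq val_inj) /= rank_indexE eq_sym.
by rewrite -[in LHS](prednK (ord_pos_gt0 le_linear x)) eqSS.
Qed.

Lemma rank_index_le x y : (rank_index x <= rank_index y)%N = le x y.
Proof.
rewrite !rank_indexE -(ord_pos_le le_linear).
move: (ord_pos_gt0 le_linear x) (ord_pos_gt0 le_linear y).
by case: (ord_pos le x) => // px; case: (ord_pos le y).
Qed.

Lemma masked_prefE S a c :
  masked_pref S a c = (S (to a) && (c == rank_index (to a)))%:R.
Proof. by rewrite mxE ord_pos_eqS. Qed.

Lemma find_counterpart_masked_pref S :
  find_counterpart (masked_pref S) = \col_a (pref_best le S (to a))%:R.
Proof.
have cumsum (c : 'I_k.+1) : \sum_(l < k.+1 | (l <= c)%N) \sum_b masked_pref S b l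
    = #|[pred y | S y && (rank_index y <= c)%N]|%:R.
  rewrite exchange_big /= -card_unlift -sum_bool_card; apply: eq_bigr => b _.
  under eq_bigr do rewrite masked_prefE.
  by rewrite /=; case: (S (to b)); rewrite /= ?sum_indicator ?big1_eq.
apply/matrixP => a z; rewrite !mxE (bigD1 (rank_index (to a))) //= big1 => [|c ne_c].
  rewrite masked_prefE eqxx andbT mxE cumsum tw_nat addr0 -natrM mulnb.
  rewrite (pref_best_card le_linear) (@eq_card _ _ [pred y | S y && le y (to a)]) //.
  by move=> y; rewrite !inE rank_index_le.
by rewrite masked_prefE (negbTE ne_c) andbF mul0r.
Qed.

Lemma eq_masked_pref (S S' : pred (option 'I_k)) :
  S =1 S' -> masked_pref S = masked_pref S'.
Proof. by move=> eqS; apply/matrixP => a c; rewrite !mxE eqS. Qed.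

Definition drop_rows (D : pred (option 'I_k)) : 'M[R]_k.+1 :=
  \matrix_(a, c) - (D (to a))%:R.

Lemma Emat_lift j : Emat R (lift ord_max j) = drop_rows (pred1 (Some j)).
Proof.
apply/matrixP => a c; rewrite !mxE /=.
case: unliftP => [i ->|->] /=; last by rewrite (negbTE (neq_lift _ _)) oppr0.
by rewrite (inj_eq lift_inj) (inj_eq (@Some_inj _)); case: (i == j); rewrite ?oppr0.
Qed.

Lemma Vmat_indicator (B : pred (option 'I_k)) :
  Vmat (\col_a (B (to a))%:R)^T = drop_rows [pred y | (y != None) && B y].
Proof.
apply/matrixP => a c; rewrite !mxE /=.
by case: unliftP => [i ->|->]; rewrite ?eqxx ?oppr0 // eq_sym (negbTE (neq_lift _ _)).
Qed.

Lemma relu_masked_pref_drop (S D : pred (option 'I_k)) :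
  map_mx (@relu R) (masked_pref S + drop_rows D)
  = masked_pref [pred y | S y && ~~ D y].
Proof. by apply/matrixP => a c; rewrite !mxE relu_bool_sub andbAC. Qed.

Lemma scale_masked_pref (b : bool) (S : pred (option 'I_k)) :
  (1 - b%:R) *: masked_pref S = masked_pref [pred y | ~~ b && S y].
Proof.
by apply/matrixP => a c; rewrite !mxE; case: b; rewrite ?subrr ?mul0r ?subr0 ?mul1r.
Qed.

End MaskedPref.

(** * One turn of TSD *)

Lemma sum_delta_scale (R : pzRingType) (V : lmodType R) (I : finType) (i0 : I)
    (F : I -> V) :
  \sum_i (i0 == i)%:R *: F i = F i0.
Proof.
rewrite (bigD1 i0) //= eqxx scale1r big1 ?addr0 // => i ne_i.
by rewrite eq_sym (negbTE ne_i) scale0r.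
Qed.

Lemma find_counterpart0 (R : realFieldType) p q :
  find_counterpart (0 : 'M[R]_(p, q)) = 0.
Proof. by rewrite /find_counterpart mul0mx. Qed.

Lemma Vmat0 (R : realFieldType) s : Vmat (0 : 'rV[R]_s.+1) = 0.
Proof. by apply/matrixP => a b; rewrite !mxE oppr0 if_same. Qed.

Lemma ext0_mulE (R : realFieldType) p q (d : 'I_p -> R) (c : 'rV[R]_q) a b :
  ((ext0 d)^T *m c) a b = oapp d 0 (unlift ord_max a) * c 0 b.
Proof. by rewrite !mxE big_ord1 !mxE. Qed.

Section TSDStep.
Variables (R : realFieldType) (n m : nat) (r : 'I_(n + m) -> 'I_n + 'I_m).
Variables (t : tsd_state R n m) (k : 'I_(n + m)).
Local Notation t' := (tsd_step (R_of R r) t k).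

Lemma R_of_lshift i : R_of R r (lshift m i) k = (r k == inl i)%:R.
Proof. by rewrite mxE (unsplitK (inl i : 'I_n + 'I_m)). Qed.

Lemma R_of_rshift j : R_of R r (rshift n j) k = (r k == inr j)%:R.
Proof. by rewrite mxE (unsplitK (inr j : 'I_n + 'I_m)). Qed.

Lemma sum_R_of_lshift p q (F : 'I_n -> 'M[R]_(p, q)) :
  \sum_i R_of R r (lshift m i) k *: F i = if r k is inl i0 then F i0 else 0.
Proof.
under eq_bigr do rewrite R_of_lshift.
case: (r k) => [i0|j0] /=; first exact: sum_delta_scale.
by rewrite big1 // => i _; rewrite scale0r.
Qed.

Lemma sum_R_of_rshift p q (F : 'I_m -> 'M[R]_(p, q)) :
  \sum_j R_of R r (rshift n j) k *: F j = if r k is inr j0 then F j0 else 0.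
Proof.
under eq_bigr do rewrite R_of_rshift.
case: (r k) => [i0|j0] /=; last exact: sum_delta_scale.
by rewrite big1 // => j _; rewrite scale0r.
Qed.

Section WorkerTurn.
Variable i0 : 'I_n.
Hypothesis turn_i0 : r k = inl i0.
Let cw := (find_counterpart (ts_PW t i0))^T.

Lemma tsd_step_worker_PW i : ts_PW t' i = map_mx (@relu R) (ts_PW t i + Vmat cw).
Proof.
rewrite /= !sum_R_of_lshift !sum_R_of_rshift turn_i0 find_counterpart0 trmx0.
by rewrite mxE subr0 scale1r addr0.
Qed.

Lemma tsd_step_worker_PF j :
  ts_PF t' j = (1 - cw 0 (lift ord_max j))
               *: map_mx (@relu R) (ts_PF t j + Emat R (lift ord_max i0)).
Proof.
by rewrite /= !sum_R_of_lshift !sum_R_of_rshift turn_i0 find_counterpart0 trmx0 Vmat0 addr0.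
Qed.

Lemma tsd_step_worker_M :
  ts_M t' = ts_M t + \matrix_(a, b) ((unlift ord_max a == Some i0)%:R * cw 0 b).
Proof.
rewrite /= !sum_R_of_lshift !sum_R_of_rshift turn_i0 find_counterpart0 trmx0 mulmx0 trmx0.
rewrite addr0 -/cw; congr (_ + _); apply/matrixP => a b; rewrite ext0_mulE [RHS]mxE.
by case: unlift => [i|] //=; rewrite R_of_lshift turn_i0 /= (inj_eq (@Some_inj _)) eq_sym.
Qed.

End WorkerTurn.

Section FirmTurn.
Variable j0 : 'I_m.
Hypothesis turn_j0 : r k = inr j0.
Let cf := (find_counterpart (ts_PF t j0))^T.

Lemma tsd_step_firm_PW i :
  ts_PW t' i = (1 - cf 0 (lift ord_max i))
               *: map_mx (@relu R) (ts_PW t i + Emat R (lift ord_max j0)).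
Proof.
by rewrite /= !sum_R_of_lshift !sum_R_of_rshift turn_j0 find_counterpart0 trmx0 Vmat0 addr0.
Qed.

Lemma tsd_step_firm_PF j : ts_PF t' j = map_mx (@relu R) (ts_PF t j + Vmat cf).
Proof.
rewrite /= !sum_R_of_lshift !sum_R_of_rshift turn_j0 find_counterpart0 trmx0.
by rewrite mxE subr0 scale1r addr0.
Qed.

Lemma tsd_step_firm_M :
  ts_M t' = ts_M t + \matrix_(a, b) ((unlift ord_max b == Some j0)%:R * cf 0 a).
Proof.
rewrite /= !sum_R_of_lshift !sum_R_of_rshift turn_j0 find_counterpart0 trmx0 mulmx0.
rewrite addr0 -/cf; congr (_ + _); apply/matrixP => a b; rewrite mxE ext0_mulE [RHS]mxE.
by case: unlift => [j|] //=; rewrite R_of_rshift turn_j0 /= (inj_eq (@Some_inj _)) eq_sym.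
Qed.

End FirmTurn.
End TSDStep.

(** * One turn of serial dictatorship *)

Section SerialDictatorship.
Variables (n m : nat).
Variables (prefW : 'I_n -> rel (option 'I_m)) (prefF : 'I_m -> rel (option 'I_n)).
Hypothesis prefW_linear : forall i, linear_order (prefW i).
Hypothesis prefF_linear : forall j, linear_order (prefF j).
Local Notation sd_step := (sd_step prefW prefF).

Definition sd_assigned (s : sd_state n m) (a : 'I_n + 'I_m) : bool :=
  match a with inl i => sd_w s i != None | inr j => sd_f s j != None end.

Lemma sd_step_assigned_self s a : sd_assigned (sd_step s a) a.
Proof.
by case: a => [i|j] /=; [case E: (sd_w s i) | case E: (sd_f s j)]; rewrite /= ?E ?eqxx.
Qed.

Lemma sd_step_assigned s a b : sd_assigned s b -> sd_assigned (sd_step s a) b.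
Proof.
case: a => [i|j] /=; [case: (sd_w s i) => [_|] | case: (sd_f s j) => [_|]] => //;
  by case: b => [i'|j'] /=; case: ifP.
Qed.

Lemma sd_step_assigned_rcons s done a :
  {in done, forall b, sd_assigned s b} ->
  {in rcons done a, forall b, sd_assigned (sd_step s a) b}.
Proof.
move=> assigned b; rewrite mem_rcons inE => /orP[/eqP -> | /assigned].
  exact: sd_step_assigned_self.
exact: sd_step_assigned.
Qed.

Definition worker_mask (s : sd_state n m) (i : 'I_n) : pred (option 'I_m) :=
  [pred y | (sd_w s i == None) && oapp (fun j => sd_f s j == None) true y].

Definition firm_mask (s : sd_state n m) (j : 'I_m) : pred (option 'I_n) :=
  [pred y | (sd_f s j == None) && oapp (fun i => sd_w s i == None) true y].

Definition worker_choice (s : sd_state n m) (i : 'I_n) : pred (option 'I_m) :=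
  pref_best (prefW i) (worker_mask s i).

Definition firm_choice (s : sd_state n m) (j : 'I_m) : pred (option 'I_n) :=
  pref_best (prefF j) (firm_mask s j).

Lemma worker_choice_free s i y : worker_choice s i y ->
  (sd_w s i == None) && oapp (fun j => sd_f s j == None) true y.
Proof. exact: pref_best_mem. Qed.

Lemma firm_choice_free s j y : firm_choice s j y ->
  (sd_f s j == None) && oapp (fun i => sd_w s i == None) true y.
Proof. exact: pref_best_mem. Qed.

Lemma worker_choiceE s i y : sd_w s i = None ->
  worker_choice s i y = (y == most_pref (prefW i) [pred j | sd_f s j == None]).
Proof. by move=> free_i; rewrite -most_pref_best // /worker_choice /worker_mask free_i. Qed.

Lemma firm_choiceE s j y : sd_f s j = None ->
  firm_choice s j y = (y == most_pref (prefF j) [pred i | sd_w s i == None]).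
Proof. by move=> free_j; rewrite -most_pref_best // /firm_choice /firm_mask free_j. Qed.

Lemma sd_step_worker_w s i0 i :
  sd_w (sd_step s (inl i0)) i = if (i == i0) && (sd_w s i0 == None)
    then Some (most_pref (prefW i0) [pred j | sd_f s j == None]) else sd_w s i.
Proof. by rewrite /=; case: (sd_w s i0) => [y|] /=; rewrite ?andbF ?andbT. Qed.

Lemma sd_step_worker_f s i0 j :
  sd_f (sd_step s (inl i0)) j
  = if worker_choice s i0 (Some j) then Some (Some i0) else sd_f s j.
Proof.
rewrite /=; case free_i0: (sd_w s i0) => [y|] /=; last by rewrite worker_choiceE // eq_sym.
by rewrite /worker_choice /pref_best /worker_mask free_i0.
Qed.

Lemma sd_step_firm_f s j0 j :
  sd_f (sd_step s (inr j0)) j = if (j == j0) && (sd_f s j0 == None)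
    then Some (most_pref (prefF j0) [pred i | sd_w s i == None]) else sd_f s j.
Proof. by rewrite /=; case: (sd_f s j0) => [y|] /=; rewrite ?andbF ?andbT. Qed.

Lemma sd_step_firm_w s j0 i :
  sd_w (sd_step s (inr j0)) i
  = if firm_choice s j0 (Some i) then Some (Some j0) else sd_w s i.
Proof.
rewrite /=; case free_j0: (sd_f s j0) => [y|] /=; last by rewrite firm_choiceE // eq_sym.
by rewrite /firm_choice /pref_best /firm_mask free_j0.
Qed.

End SerialDictatorship.

(** * TSD simulates serial dictatorship *)

Section Simulation.
Variables (R : realFieldType) (n m : nat).
Variables (prefW : 'I_n -> rel (option 'I_m)) (prefF : 'I_m -> rel (option 'I_n)).
Variable r : 'I_(n + m) -> 'I_n + 'I_m.
Hypothesis prefW_linear : forall i, linear_order (prefW i).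
Hypothesis prefF_linear : forall j, linear_order (prefF j).
Local Notation sd_step := (sd_step prefW prefF).
Local Notation tsd_step := (tsd_step (R_of R r)).

(* Agents that have not been assigned yet get a zero row or column. *)
Definition partial_matching_matrix (s : sd_state n m) : 'M[R]_(n.+1, m.+1) :=
  \matrix_(a, b)
    match unlift ord_max a, unlift ord_max b with
    | Some i, y => (sd_w s i == Some y)%:R
    | None, Some j => (sd_f s j == Some None)%:R
    | None, None => 0
    end.

(* The matrices of agents that already had their turn are junk, but TSD never
   reads them again because the ranking [r] is injective. *)
Definition tsd_simulates (s : sd_state n m) (t : tsd_state R n m)
    (done : seq ('I_n + 'I_m)) : Prop :=
  [/\ forall i, inl i \notin done ->
        ts_PW t i = masked_pref R (prefW i) (worker_mask s i),
      forall j, inr j \notin done ->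
        ts_PF t j = masked_pref R (prefF j) (firm_mask s j),
      ts_M t = partial_matching_matrix s &
      {in done, forall a, sd_assigned s a}].

Section WorkerTurn.
Variables (s : sd_state n m) (t : tsd_state R n m) (done : seq ('I_n + 'I_m)).
Variables (k : 'I_(n + m)) (i0 : 'I_n).
Hypotheses (turn_i0 : r k = inl i0) (fresh_i0 : inl i0 \notin done).
Hypothesis inv : tsd_simulates s t done.
Local Notation s' := (sd_step s (inl i0)).
Local Notation t' := (tsd_step t k).

Lemma worker_counterpartE : (find_counterpart (ts_PW t i0))^T
    = (\col_a (worker_choice prefW s i0 (unlift ord_max a))%:R)^T.
Proof. by case: inv => invW _ _ _; rewrite invW // find_counterpart_masked_pref. Qed.

Lemma worker_turn_PW i : inl i \notin rcons done (inl i0) ->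
  ts_PW t' i = masked_pref R (prefW i) (worker_mask s' i).
Proof.
rewrite mem_rcons inE negb_or => /andP[/negbTE ne_i fresh_i]; case: inv => invW _ _ _.
rewrite (tsd_step_worker_PW _ turn_i0) worker_counterpartE Vmat_indicator invW //.
rewrite relu_masked_pref_drop; apply: eq_masked_pref => y.
rewrite /worker_mask !inE (sd_step_worker_w _ prefF) [i == i0]ne_i /=.
case: y => [j|] /=; last by rewrite andbT.
by rewrite sd_step_worker_f //; case: (worker_choice _ s i0 _); rewrite /= ?andbF ?andbT.
Qed.

Lemma worker_turn_PF j : inr j \notin rcons done (inl i0) ->
  ts_PF t' j = masked_pref R (prefF j) (firm_mask s' j).
Proof.
rewrite mem_rcons inE => fresh_j; case: inv => _ invF _ _.
rewrite (tsd_step_worker_PF _ turn_i0) worker_counterpartE !mxE liftK Emat_lift invF //.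
rewrite relu_masked_pref_drop scale_masked_pref; apply: eq_masked_pref => y.
rewrite /firm_mask !inE sd_step_worker_f //.
case: (worker_choice _ s i0 _) => //=; case: y => [i|] /=; last by rewrite !andbT.
rewrite (sd_step_worker_w _ prefF) (inj_eq (@Some_inj _)).
by case: (i =P i0) => [->|_]; [case: (sd_w s i0) => [?|] /=; rewrite !andbF | rewrite andbT].
Qed.

Lemma worker_turn_M : ts_M t' = partial_matching_matrix s'.
Proof.
case: inv => _ _ invM _.
rewrite (tsd_step_worker_M _ turn_i0) invM worker_counterpartE.
apply/matrixP => a b; rewrite !mxE; case: (unlift ord_max a) => [i|] /=.
  rewrite (sd_step_worker_w _ prefF) (inj_eq (@Some_inj _)).
  case: (i =P i0) => [->|_] /=; last by rewrite mul0r addr0.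
  rewrite mul1r; case free_i0: (sd_w s i0) => [y|] /=.
    have /negbTE -> : ~~ worker_choice prefW s i0 (unlift ord_max b).
      by apply/negP => /worker_choice_free; rewrite free_i0.
    by rewrite addr0.
  by rewrite add0r (worker_choiceE _ _ free_i0) // (inj_eq (@Some_inj _)) eq_sym.
rewrite mul0r addr0; case: (unlift ord_max b) => [j|] //.
by rewrite sd_step_worker_f //; case: ifP => // /worker_choice_free /andP[_ /= /eqP ->].
Qed.

End WorkerTurn.

Section FirmTurn.
Variables (s : sd_state n m) (t : tsd_state R n m) (done : seq ('I_n + 'I_m)).
Variables (k : 'I_(n + m)) (j0 : 'I_m).
Hypotheses (turn_j0 : r k = inr j0) (fresh_j0 : inr j0 \notin done).
Hypothesis inv : tsd_simulates s t done.
Local Notation s' := (sd_step s (inr j0)).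
Local Notation t' := (tsd_step t k).

Lemma firm_counterpartE : (find_counterpart (ts_PF t j0))^T
    = (\col_a (firm_choice prefF s j0 (unlift ord_max a))%:R)^T.
Proof. by case: inv => _ invF _ _; rewrite invF // find_counterpart_masked_pref. Qed.

Lemma firm_turn_PW i : inl i \notin rcons done (inr j0) ->
  ts_PW t' i = masked_pref R (prefW i) (worker_mask s' i).
Proof.
rewrite mem_rcons inE => fresh_i; case: inv => invW _ _ _.
rewrite (tsd_step_firm_PW _ turn_j0) firm_counterpartE !mxE liftK Emat_lift invW //.
rewrite relu_masked_pref_drop scale_masked_pref; apply: eq_masked_pref => y.
rewrite /worker_mask !inE sd_step_firm_w //.
case: (firm_choice _ s j0 _) => //=; case: y => [j|] /=; last by rewrite !andbT.
rewrite (sd_step_firm_f prefW) (inj_eq (@Some_inj _)).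
by case: (j =P j0) => [->|_]; [case: (sd_f s j0) => [?|] /=; rewrite !andbF | rewrite andbT].
Qed.

Lemma firm_turn_PF j : inr j \notin rcons done (inr j0) ->
  ts_PF t' j = masked_pref R (prefF j) (firm_mask s' j).
Proof.
rewrite mem_rcons inE negb_or => /andP[/negbTE ne_j fresh_j]; case: inv => _ invF _ _.
rewrite (tsd_step_firm_PF _ turn_j0) firm_counterpartE Vmat_indicator invF //.
rewrite relu_masked_pref_drop; apply: eq_masked_pref => y.
rewrite /firm_mask !inE (sd_step_firm_f prefW) [j == j0]ne_j /=.
case: y => [i|] /=; last by rewrite andbT.
by rewrite sd_step_firm_w //; case: (firm_choice _ s j0 _); rewrite /= ?andbF ?andbT.
Qed.

Lemma firm_turn_M : ts_M t' = partial_matching_matrix s'.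
Proof.
case: inv => _ _ invM _.
rewrite (tsd_step_firm_M _ turn_j0) invM firm_counterpartE.
apply/matrixP => a b; rewrite !mxE; case: (unlift ord_max a) => [i|] /=.
  rewrite sd_step_firm_w //; case: ifP => [/firm_choice_free /andP[_ /= /eqP ->] | _].
    by rewrite add0r mulr1 !(inj_eq (@Some_inj _)) eq_sym.
  by rewrite mulr0 addr0.
case: (unlift ord_max b) => [j|] /=; last by rewrite mul0r addr0.
rewrite (sd_step_firm_f prefW) (inj_eq (@Some_inj _)).
case: (j =P j0) => [->|_] /=; last by rewrite mul0r addr0.
rewrite mul1r; case free_j0: (sd_f s j0) => [y|] /=.
  have /negbTE -> : ~~ firm_choice prefF s j0 None.
    by apply/negP => /firm_choice_free; rewrite free_j0.
  by rewrite addr0.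
by rewrite add0r (firm_choiceE _ _ free_j0) // (inj_eq (@Some_inj _)) eq_sym.
Qed.

End FirmTurn.

Lemma tsd_simulates_step s t done k : r k \notin done -> tsd_simulates s t done ->
  tsd_simulates (sd_step s (r k)) (tsd_step t k) (rcons done (r k)).
Proof.
move=> fresh inv.
case: (inv) => _ _ _ /(sd_step_assigned_rcons prefW prefF (a := r k)) assigned.
case turn: (r k) fresh assigned => [i0|j0] fresh assigned.
  split=> //; [exact: worker_turn_PW | exact: worker_turn_PF | ].
  exact: worker_turn_M turn fresh inv.
split=> //; [exact: firm_turn_PW | exact: firm_turn_PF | ].
exact: firm_turn_M turn fresh inv.
Qed.

Lemma tsd_simulates_foldl ks s t done :
  uniq (done ++ map r ks) -> tsd_simulates s t done ->
  tsd_simulates (foldl (fun s k => sd_step s (r k)) s ks) (foldl tsd_step t ks)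
                (done ++ map r ks).
Proof.
elim: ks s t done => [|k ks IH] s t done /=; first by rewrite cats0.
rewrite -cat_rcons => uniq_done inv; apply: IH => //; apply: tsd_simulates_step inv.
by move: uniq_done; rewrite cat_uniq rcons_uniq => /andP[/andP[]].
Qed.

Lemma tsd_simulates_init :
  tsd_simulates (SDState (fun _ => None) (fun _ => None))
                (TSDState (PW_of R prefW) (PF_of R prefF) 0) [::].
Proof.
split=> //=.
- move=> i _; apply/matrixP => a b; rewrite !mxE /worker_mask inE /=.
  by case: unlift.
- move=> j _; apply/matrixP => a b; rewrite !mxE /firm_mask inE /=.
  by case: unlift.
- apply/matrixP => a b; rewrite !mxE.
  by case: unlift => [i|] //; case: unlift.
Qed.

Lemma assigned_unmatchedE (T : finType) (y : option (option T)) :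
  y != None -> (y == Some None) = ~~ [exists x, y == Some (Some x)].
Proof.
case: y => [[x|]|] // _; first by apply/esym/negbF/existsP; exists x.
by apply/esym/negP => /existsP[].
Qed.

Lemma partial_matching_matrix_complete s :
  (forall a, sd_assigned s a) -> partial_matching_matrix s = matching_matrix R s.
Proof.
move=> assigned; apply/matrixP => a b; rewrite !mxE.
case: (unlift ord_max a) => [i|]; case: (unlift ord_max b) => [j|] //.
  by rewrite assigned_unmatchedE //; apply: (assigned (inl i)).
by rewrite assigned_unmatchedE //; apply: (assigned (inr j)).
Qed.

End Simulation.

Theorem proposition3 (R : realFieldType) (n m : nat)
  (prefW : 'I_n -> rel (option 'I_m)) (prefF : 'I_m -> rel (option 'I_n))
  (r : 'I_(n + m) -> 'I_n + 'I_m) :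
  (forall i, linear_order (prefW i)) ->
  (forall j, linear_order (prefF j)) ->
  bijective r ->
  TSD (PW_of R prefW) (PF_of R prefF) (R_of R r)
  = matching_matrix R (SD prefW prefF r).
Proof.
move=> prefW_linear prefF_linear [r' rK r'K].
have uniq_r : uniq ([::] ++ map r (enum 'I_(n + m))).
  by rewrite map_inj_uniq ?enum_uniq //; exact: can_inj rK.
have [_ _ sim_M assigned] := tsd_simulates_foldl prefW_linear prefF_linear uniq_r
  (tsd_simulates_init R prefW prefF).
rewrite /TSD /SD sim_M; apply: partial_matching_matrix_complete => a.
by apply: assigned; rewrite -(r'K a) map_f ?mem_enum.
Qed.
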